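(* Let $n$ be a positive integer and let $(a_{i,j})_{0\le i\le n,\ 0\le j\le n-1}$ be an array of elements of a commutative ring. Then $$\det_{0\le i,j\le n-1}(a_{i,j}+a_{i+1,j})=\sum_{s=0}^{n}\det_{0\le i,j\le n-1}\bigl(a_{i+\chi(i\ge s),j}\bigr),$$ where $\chi(\mathcal S)=1$ if the statement $\mathcal S$ is true and $\chi(\mathcal S)=0$ otherwise. *)

From mathcomp Require Import all_boot all_algebra.

From mathcomp Require Import all_boot all_algebra.
From mathcomp Require Import fingroup perm.
Import GRing.Theory.
Local Open Scope ring_scope.

(* Expanding the determinant of a row-wise sum by multilinearity in every row
   gives a sum over subsets J of rows, row i being a_{i+1} for i in J and a_i
   otherwise.  If some i is in J but i+1 is not, rows i and i+1 are both
   a_{i+1} and the term vanishes; the remaining J are exactly the final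
   segments {i | s <= i}, s = 0..n. *)

Lemma det_add_sum_subsets (R : comPzRingType) (n : nat) (A B : 'M[R]_n) :
  \det (A + B) =
  \sum_(J : {set 'I_n}) \det (\matrix_(i, j) (if i \in J then B i j else A i j)).
Proof.
rewrite /determinant; under eq_bigr => s _.
  rewrite (eq_bigr (fun i => B i (s i) + A i (s i))); last first.
    by move=> i _; rewrite mxE addrC.
  rewrite bigA_distr mulr_sumr; over.
rewrite exchange_big; apply: eq_bigr => J _; apply: eq_bigr => s _.
by congr (_ * _); apply: eq_bigr => i _; rewrite mxE; case: (i \in J).
Qed.

Section FinalSegments.
Context {n : nat}.

Definition final_segment (s : 'I_n.+1) : {set 'I_n} := [set i : 'I_n | (s <= i)%N].

Lemma final_segment_inj : injective final_segment.
Proof.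
suff lt_contra u v : final_segment u = final_segment v -> ~ (u < v)%N.
  move=> s t eq_st; apply: val_inj.
  by case: (ltngtP s t) => // [/(lt_contra _ _ eq_st) | /(lt_contra _ _ (esym eq_st))].
move=> eq_uv lt_uv; have u_lt_n : (u < n)%N := leq_ltn_trans lt_uv (ltn_ord v).
have /setP/(_ (Ordinal u_lt_n)) := eq_uv.
by rewrite !inE /= leqnn leqNgt lt_uv.
Qed.

Definition succ_closed (J : {set 'I_n}) :=
  forall i j : 'I_n, j = i.+1 :> nat -> i \in J -> j \in J.

Lemma succ_closed_mono (J : {set 'I_n}) :
  succ_closed J -> forall i j : 'I_n, (i <= j)%N -> i \in J -> j \in J.
Proof.
move=> closedJ i [j j_lt_n]; elim: j j_lt_n => [|j IHj] j_lt_n le_ij iJ.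
  by have -> : Ordinal j_lt_n = i by apply/val_inj/eqP; rewrite eq_sym -leqn0.
have [eq_ij | lt_ij] := eqVneq (val i) j.+1.
  by have <- : i = Ordinal j_lt_n by apply: val_inj.
apply: (closedJ (Ordinal (ltnW j_lt_n))) => //; apply: IHj iJ.
by rewrite -ltnS ltn_neqAle lt_ij le_ij.
Qed.

Lemma succ_closed_final_segment (J : {set 'I_n}) :
  succ_closed J -> exists s, J = final_segment s.
Proof.
move=> closedJ; set s := find (mem J) (enum 'I_n).
have s_le_n : (s <= n)%N by rewrite -[X in (_ <= X)%N]size_enum_ord find_size.
exists (Ordinal (s_le_n : (s < n.+1)%N)); apply/setP => i; rewrite inE /=.
case: leqP => [le_si | lt_is]; last first.
  by have := before_find i lt_is; rewrite nth_ord_enum => /= ->.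
have s_lt_n : (s < n)%N := leq_ltn_trans le_si (ltn_ord i).
have := nth_find i (_ : has (mem J) (enum 'I_n)).
rewrite has_find size_enum_ord => /(_ s_lt_n) sJ.
by apply: succ_closed_mono sJ => //; rewrite nth_enum_ord.
Qed.

End FinalSegments.

Section ShiftedRows.
Variables (R : comPzRingType) (n : nat) (a : 'M[R]_(n.+1, n)).

Definition shifted_rows (J : {set 'I_n}) : 'M[R]_n :=
  \matrix_(i, j) a (inord (i + (i \in J))) j.

Lemma det_shifted_rows_eq0 (J : {set 'I_n}) :
  (forall s, J != final_segment s) -> \det (shifted_rows J) = 0.
Proof.
move=> not_final.
case: (pickP [pred ij : 'I_n * 'I_n |
          [&& ij.2 == ij.1.+1 :> nat, ij.1 \in J & ij.2 \notin J]]) => [[i j]|].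
  case/and3P => /eqP /= ji iJ jNJ.
  apply: (determinant_alternate (i1 := i) (i2 := j)).
    by apply/eqP => eq_ij; move: ji; rewrite eq_ij => /n_Sn.
  move=> k; rewrite !mxE (negbTE jNJ) iJ addn0 addn1.
  by congr (a _ _); apply: val_inj; rewrite /= ji.
move=> no_descent; have closedJ : succ_closed J.
  move=> i j ji iJ; apply: contraFT (no_descent (i, j)) => jNJ.
  by rewrite /= ji eqxx iJ jNJ.
have [s eq_Js] := succ_closed_final_segment _ closedJ.
by have := not_final s; rewrite eq_Js eqxx.
Qed.

Lemma det_add_adjacent_rows :
  \det (\matrix_(i, j) (a (widen_ord (leqnSn n) i) j + a (lift ord0 i) j))
  = \sum_(J : {set 'I_n}) \det (shifted_rows J).
Proof.
have -> : \matrix_(i, j) (a (widen_ord (leqnSn n) i) j + a (lift ord0 i) j)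
          = \matrix_(i, j) a (widen_ord (leqnSn n) i) j
            + \matrix_(i, j) a (lift ord0 i) j.
  by apply/matrixP => i j; rewrite !mxE.
rewrite det_add_sum_subsets; apply: eq_bigr => J _; congr (\det _).
apply/matrixP => i j; rewrite !mxE.
case: (i \in J); congr (a _ _); apply: val_inj; rewrite /= inordK.
- by rewrite addn1.
- by rewrite addn1 ltnS.
- by rewrite addn0.
- by rewrite addn0 ltnS ltnW.
Qed.

Lemma sum_det_shifted_rows :
  \sum_(J : {set 'I_n}) \det (shifted_rows J)
  = \sum_(s < n.+1) \det (shifted_rows (final_segment s)).
Proof.
rewrite (bigID (mem [set final_segment s | s : 'I_n.+1])) /=.
rewrite [X in _ + X]big1 ?addr0 => [|J /imsetP not_final].
  by rewrite big_imset //; move=> s t _ _; apply: final_segment_inj.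
apply: det_shifted_rows_eq0 => s; apply/eqP => eq_Js.
by apply: not_final; exists s.
Qed.

End ShiftedRows.

Theorem lemma4 (R : comPzRingType) (n : nat) (hn : (0 < n)%N)
    (a : 'M[R]_(n.+1, n)) :
  \det (\matrix_(i < n, j < n) (a (widen_ord (leqnSn n) i) j + a (lift ord0 i) j))
  = \sum_(s < n.+1)
      \det (\matrix_(i < n, j < n) a (inord (i + (s <= i)%N)) j).
Proof.
rewrite det_add_adjacent_rows sum_det_shifted_rows; apply: eq_bigr => s _.
by congr (\det _); apply/matrixP => i j; rewrite !mxE inE.
Qed.
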